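(* Let $d,r\in\mathbb{N}$, $n\geq 3$, and let $k$ be a nonnegative integer with $$k\leq \left(1+\binom{2(d+1)}{r-1}\right)^{-1}\left(\frac n2-1\right)-d-5.$$ Let $G$ and $H$ be graphs on $n$ vertices, each with average degree at most $d$. Suppose there are distinct vertices $u_1,\dots,u_{n-k}$ of $G$ and distinct vertices $w_1,\dots,w_{n-k}$ of $H$ such that $G-u_i\cong H-w_i$ for every $i\in[n-k]$. Then $G$ and $H$ contain the same number of cliques of size $r$. (That is, the number of $r$-cliques can be reconstructed from any deck missing at most the stated number of cards.)
   Context: All graphs are finite, simple and undirected. For a graph $G$ and $v\in V(G)$, the card $G-v$ is the graph obtained by deleting $v$ and all edges incident to it; the deck is the multiset of unlabelled cards. An $r$-clique is a set of $r$ pairwise adjacent vertices. The average degree of an $n$-vertex graph with $m$ edges is $2m/n$. *)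

From HB Require Import structures.
From mathcomp Require Import all_boot all_order all_algebra.
Set Implicit Arguments. Unset Strict Implicit. Unset Printing Implicit Defensive.

Definition simple_graph (n : nat) (e : rel 'I_n) : Prop :=
  symmetric e /\ irreflexive e.

Definition deg (n : nat) (e : rel 'I_n) (v : 'I_n) : nat := #|[set y | e v y]|.

Definition avg_deg (n : nat) (e : rel 'I_n) : rat :=
  ((\sum_(v : 'I_n) deg e v)%:R / n%:R)%R.

Definition is_clique (n : nat) (e : rel 'I_n) (S : {set 'I_n}) : bool :=
  [forall x in S, forall y in S, (x != y) ==> e x y].

Definition num_cliques (n : nat) (e : rel 'I_n) (r : nat) : nat :=
  #|[set S : {set 'I_n} | (#|S| == r) && is_clique e S]|.

(* The card G - u: vertex type = vertices other than u, induced adjacency. *)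
Definition card_vert (n : nat) (u : 'I_n) := {x : 'I_n | x != u}.

Definition cards_iso (n : nat) (e1 : rel 'I_n) (u : 'I_n) (e2 : rel 'I_n) (w : 'I_n) : Prop :=
  exists f : card_vert u -> card_vert w,
    bijective f /\
    forall x y : card_vert u, e1 (val x) (val y) = e2 (val (f x)) (val (f y)).

(* binom(m, r-1) with the convention binom(m, -1) = 0 *)
Definition binom_pred (m r : nat) : nat :=
  if r is r'.+1 then 'C(m, r') else 0.

From mathcomp Require Import all_boot all_order all_algebra.
From mathcomp Require Import zify ring lra.
Import GRing.Theory Num.Theory.
Set Implicit Arguments. Unset Strict Implicit. Unset Printing Implicit Defensive.

(* Write c(v) for the number of r-cliques through v.  A card
   G - u determines the number of r-cliques of G avoiding u, which equals
   N(G) - c(u); hence c_G(u_i) - c_H(w_i) = N(G) - N(H) =: D for all i.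
   A card G - u also determines, for every t, how many vertices v <> u lie
   in at most t cliques avoiding u; this count differs from
   A_G(t) = #{v | c_G(v) <= t} by at most deg(u) + 1.  Comparing G and H
   through a card of small degree delta and through the n - k shared cards
   gives A_G(t + D) <= A_G(t) + k + delta + 1 whenever D > 0, and iterating
   from A_G(D - 1) <= k bounds A_G(C) for C = binom(2(d+1), r-1).  But every
   vertex of degree at most 2d+1 lies in at most C cliques, and fewer than
   n/2 vertices have larger degree; the hypothesis on k makes these bounds
   incompatible.  So N(G) <= N(H), and N(H) <= N(G) by symmetry. *)

Definition r_clique n (e : rel 'I_n) r (S : {set 'I_n}) := (#|S| == r) && is_clique e S.

Definition cliques_at n (e : rel 'I_n) r v := #|[set S | r_clique e r S && (v \in S)]|.

(* Number of r-cliques containing v and avoiding u: a quantity of the card G - u. *)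
Definition cliques_at_avoiding n (e : rel 'I_n) r u v :=
  #|[set S | [&& r_clique e r S, v \in S & u \notin S]]|.

(* Number of r-cliques avoiding u: also a quantity of the card G - u. *)
Definition cliques_avoiding n (e : rel 'I_n) r u :=
  #|[set S | r_clique e r S && (u \notin S)]|.

Definition few_cliques n (e : rel 'I_n) r t := #|[set v | cliques_at e r v <= t]|.

(* The analogue of few_cliques computed inside the card G - u. *)
Definition few_cliques_avoiding n (e : rel 'I_n) r u t :=
  #|[set v | (v != u) && (cliques_at_avoiding e r u v <= t)]|.

(* An isomorphism G - u ~ H - w, extended to the whole vertex set by u |-> w. *)
Definition card_iso_map n (e1 : rel 'I_n) u e2 w (F : 'I_n -> 'I_n) :=
  [/\ injective F, F u = w & forall x y, x != u -> y != u -> e1 x y = e2 (F x) (F y)].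

Lemma num_cliques_split n (e : rel 'I_n) r u :
  num_cliques e r = cliques_avoiding e r u + cliques_at e r u.
Proof.
rewrite /num_cliques -(cardsID [set S : {set 'I_n} | u \in S]) addnC.
by congr (_ + _); apply: eq_card => S; rewrite !inE /r_clique // andbC.
Qed.

Lemma card_iso_mapP n (e1 : rel 'I_n) u e2 w :
  cards_iso e1 u e2 w -> exists F, card_iso_map e1 u e2 w F.
Proof.
case=> f [fbij fe].
pose F x := odflt w (omap (fun y => val (f y)) (insub x : option (card_vert u))).
have Fu : F u = w by rewrite /F insubF // eqxx.
have Fx x (xu : x != u) : F x = val (f (Sub x xu)) by rewrite /F insubT.
exists F; split => //.
- move=> x y; case: (eqVneq x u) => [->|xu]; case: (eqVneq y u) => [->|yu] //.
  + by rewrite Fu Fx => E; have := valP (f (Sub y yu)); rewrite -E eqxx.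
  + by rewrite Fu Fx => E; have := valP (f (Sub x xu)); rewrite E eqxx.
  + by rewrite !Fx => /val_inj /(bij_inj fbij) /(congr1 val).
- by move=> x y xu yu; rewrite !Fx; exact: (fe (Sub x xu) (Sub y yu)).
Qed.

Lemma card_iso_map_inv n (e1 : rel 'I_n) u e2 w F :
  card_iso_map e1 u e2 w F -> exists2 G, card_iso_map e2 w e1 u G & cancel F G.
Proof.
case=> Finj Fu Fe; exists (invF Finj); last exact: invF_f.
split; first exact: (can_inj (f_invF Finj)).
  by rewrite -Fu invF_f.
have Gneq x : x != w -> invF Finj x != u.
  by apply: contraNneq => E; have := f_invF Finj x; rewrite E Fu => <-.
by move=> x y xw yw; rewrite Fe ?Gneq // !f_invF.
Qed.

Section CardIsoMap.
Variables (n : nat) (e1 e2 : rel 'I_n) (u w : 'I_n) (F : 'I_n -> 'I_n).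
Hypothesis isoF : card_iso_map e1 u e2 w F.

Lemma r_clique_map r (S : {set 'I_n}) : u \notin S -> r_clique e1 r S ->
  r_clique e2 r (F @: S) && (w \notin F @: S).
Proof.
have [Finj Fu Fe] := isoF; move=> uS /andP [cS /forallP clS].
rewrite /r_clique card_imset // cS -Fu mem_imset // uS andbT /=.
apply/forallP => a; apply/implyP => /imsetP [x xS ->].
apply/forallP => b; apply/implyP => /imsetP [y yS ->]; apply/implyP => Fxy.
have xy : x != y by apply: contraNneq Fxy => ->.
have xu : x != u by apply: contraNneq uS => <-.
have yu : y != u by apply: contraNneq uS => <-.
rewrite -Fe //.
by move: (clS x) => /implyP /(_ xS) /forallP /(_ y) /implyP /(_ yS) /implyP /(_ xy).
Qed.

Lemma cliques_avoiding_le r : cliques_avoiding e1 r u <= cliques_avoiding e2 r w.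
Proof.
have [Finj _ _] := isoF.
rewrite /cliques_avoiding -(card_imset _ (imset_inj Finj)); apply: subset_leq_card.
apply/subsetP => T /imsetP [S]; rewrite inE => /andP [clS uS] ->.
by rewrite inE r_clique_map.
Qed.

Lemma cliques_at_avoiding_le r x :
  cliques_at_avoiding e1 r u x <= cliques_at_avoiding e2 r w (F x).
Proof.
have [Finj _ _] := isoF.
rewrite /cliques_at_avoiding -(card_imset _ (imset_inj Finj)); apply: subset_leq_card.
apply/subsetP => T /imsetP [S]; rewrite inE => /and3P [clS xS uS] ->.
by have /andP [clFS wFS] := r_clique_map uS clS; rewrite inE clFS wFS mem_imset // xS.
Qed.

End CardIsoMap.

Lemma cliques_avoiding_iso n (e1 e2 : rel 'I_n) u w F r :
  card_iso_map e1 u e2 w F -> cliques_avoiding e1 r u = cliques_avoiding e2 r w.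
Proof.
move=> isoF; have [G isoG _] := card_iso_map_inv isoF.
by apply/eqP; rewrite eqn_leq (cliques_avoiding_le isoF) (cliques_avoiding_le isoG).
Qed.

Lemma few_cliques_avoiding_le n (e1 e2 : rel 'I_n) u w F r t :
  card_iso_map e1 u e2 w F -> few_cliques_avoiding e1 r u t <= few_cliques_avoiding e2 r w t.
Proof.
move=> isoF; have [Finj Fu _] := isoF; have [G isoG FK] := card_iso_map_inv isoF.
rewrite /few_cliques_avoiding -(card_imset _ Finj); apply: subset_leq_card.
apply/subsetP => T /imsetP [x]; rewrite inE => /andP [xu cx] ->.
rewrite inE -Fu (inj_eq Finj) xu /=; apply: leq_trans cx.
by have := cliques_at_avoiding_le isoG r (F x); rewrite FK Fu.
Qed.

Lemma few_cliques_avoiding_iso n (e1 e2 : rel 'I_n) u w F r t :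
  card_iso_map e1 u e2 w F -> few_cliques_avoiding e1 r u t = few_cliques_avoiding e2 r w t.
Proof.
move=> isoF; have [G isoG _] := card_iso_map_inv isoF.
by apply/eqP; rewrite eqn_leq (few_cliques_avoiding_le _ _ isoF) (few_cliques_avoiding_le _ _ isoG).
Qed.

(* Deleting a vertex removes one vertex from the count ... *)
Lemma few_cliques_le_avoiding n (e : rel 'I_n) r u t :
  few_cliques e r t <= few_cliques_avoiding e r u t + 1.
Proof.
rewrite addnC; apply: leq_trans (_ : #|u |: [set v | (v != u) &&
  (cliques_at_avoiding e r u v <= t)]| <= _); last by rewrite cardsU1 leq_add2r leq_b1.
apply: subset_leq_card; apply/subsetP => v; rewrite !inE => cv.
case: (eqVneq v u) => //= _; apply: leq_trans cv.
by apply: subset_leq_card; apply/subsetP => S; rewrite !inE => /and3P [-> ->].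
Qed.

(* ... and changes c(v) only for the neighbours of the deleted vertex. *)
Lemma few_cliques_avoiding_le_deg n (e : rel 'I_n) r u t : simple_graph e ->
  few_cliques_avoiding e r u t <= few_cliques e r t + deg e u.
Proof.
case=> esym _; apply: leq_trans (leq_card_setU [set v | cliques_at e r v <= t] [set y | e u y]).
apply: subset_leq_card; apply/subsetP => v; rewrite !inE => /andP [vu cv].
case euv: (e u v); rewrite ?orbT // orbF.
have nonadj S : r_clique e r S -> v \in S -> u \notin S.
  move=> /andP [_ /forallP clS] vS; apply/negP => uS.
  move: (clS v) => /implyP /(_ vS) /forallP /(_ u) /implyP /(_ uS) /implyP /(_ vu).
  by rewrite esym euv.
apply: leq_trans cv; apply: subset_leq_card; apply/subsetP => S; rewrite !inE.
by case/andP=> clS vS; rewrite clS vS nonadj.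
Qed.

Lemma cliques_at_le_binom n (e : rel 'I_n) r v : cliques_at e r v <= binom_pred (deg e v) r.
Proof.
case: r => [|r] /=.
  rewrite leqn0 cards_eq0; apply/eqP/setP => S; rewrite !inE.
  by apply/negbTE/negP => /andP [/andP [/eqP /cards0_eq -> _]]; rewrite inE.
rewrite /cliques_at /deg -cards_draws -(card_in_imset (f := fun S => S :\ v)).
  apply: subset_leq_card; apply/subsetP => T /imsetP [S]; rewrite inE.
  move=> /andP [/andP [/eqP cS /forallP clS] vS] ->; rewrite inE.
  apply/andP; split; last by move: cS; rewrite (cardsD1 v) vS add1n => -[->].
  apply/subsetP => y; rewrite !inE => /andP [yv yS].
  move: (clS v) => /implyP /(_ vS) /forallP /(_ y) /implyP /(_ yS) /implyP.
  by apply; rewrite eq_sym.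
move=> S1 S2; rewrite !inE => /andP [_ v1] /andP [_ v2] E.
by rewrite -(setD1K v1) E setD1K.
Qed.

Lemma binom_pred_mono m m' r : m <= m' -> binom_pred m r <= binom_pred m' r.
Proof. by case: r => //= r; apply: leq_bin2l. Qed.

Lemma card_le_preimage n k (u : 'I_(n - k) -> 'I_n) (P : pred 'I_n) :
  injective u -> #|[set v | P v]| <= #|[set i | P (u i)]| + k.
Proof.
move=> uinj.
apply: leq_trans (_ : #|u @: [set i | P (u i)] :|: ~: (u @: setT)| <= _).
  apply: subset_leq_card; apply/subsetP => v; rewrite !inE => Pv.
  case: (boolP (v \in u @: setT)) => [/imsetP [i _ vE] | ] /=; last by rewrite orbT.
  by rewrite orbF vE imset_f // inE -vE.
apply: leq_trans (leq_card_setU _ _) _.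
rewrite card_imset // leq_add2l cardsCs setCK card_imset // cardsT !card_ord; lia.
Qed.

Lemma card_preimage_le n m (w : 'I_m -> 'I_n) (P : pred 'I_n) :
  injective w -> #|[set i | P (w i)]| <= #|[set v | P v]|.
Proof.
move=> winj; rewrite -(card_imset _ winj); apply: subset_leq_card.
by apply/subsetP => v /imsetP [i]; rewrite !inE => Pi ->.
Qed.

Lemma exists_small_image n m (u : 'I_m -> 'I_n) (f : 'I_n -> nat) :
  0 < m -> injective u -> exists i, m * f (u i) <= \sum_v f v.
Proof.
move=> m0 uinj; have [i _ Hmin] := @arg_minnP _ (Ordinal m0) predT (fun i => f (u i)) isT.
exists i; apply: leq_trans (_ : \sum_j f (u j) <= _).
  by rewrite -{1}(card_ord m) -sum_nat_const; apply: leq_sum => j _; exact: Hmin.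
rewrite -(big_imset _ (in2W uinj)) /= [X in _ <= X](bigID (mem (u @: xpredT))) /=.
exact: leq_addr.
Qed.

Lemma markov_count n (f : 'I_n -> nat) b : #|[set v | b <= f v]| * b <= \sum_v f v.
Proof.
rewrite -sum_nat_const [X in _ <= X](bigID (fun v => b <= f v)) /=.
apply: (leq_trans _ (leq_addr _ _)); rewrite big_mkcond [X in _ <= X]big_mkcond /=.
by apply: leq_sum => v _; rewrite inE; case: ifP.
Qed.

Lemma iterated_growth (A : nat -> nat) (D a s C : nat) :
  0 < D -> {homo A : x y / x <= y} -> A D.-1 <= a ->
  (forall t, A (t + D) <= A t + s) -> A C <= a + C * s.
Proof.
move=> D0 Amono base step.
have chain m : A (D.-1 + m * D) <= a + m * s.
  elim: m => [|m IH]; first by rewrite mul0n !addn0.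
  have -> : D.-1 + m.+1 * D = D.-1 + m * D + D by rewrite mulSn; lia.
  by rewrite mulSn; have := step (D.-1 + m * D); lia.
apply: leq_trans (chain C); apply: Amono.
have CD : C * 1 <= C * D by rewrite leq_mul2l D0 orbT.
lia.
Qed.

Lemma small_card_degree n k d C delta :
  2 * (C + 1) * (k + d + 5) + 2 <= n -> (n - k) * delta <= d * n ->
  C * (delta + 1) <= (C + 1) * (d + 5).
Proof.
move=> Hn Hdelta; have [m En] : exists m, n = m + k by exists (n - k); lia.
subst n.
rewrite addnK in Hdelta; have p1 := leq0n (C * k); have p2 := leq0n (C * d).
(* For delta = d + x with x > 0, the bound m * x <= d * k and m >= 2 C k give C x <= d. *)
case: (leqP delta (d + 4)) => hdelta.
  have : C * (delta + 1) <= C * (d + 5) by rewrite leq_mul2l; apply/orP; right; lia.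
  lia.
have [x Ex] : exists x, delta = d + x by exists (delta - d); lia.
subst delta.
have E1 : m * x <= d * k by lia.
have Ck : 2 * (C * k) <= m by lia.
have E2 : C * (m * x) <= C * (d * k) by rewrite leq_mul2l E1 orbT.
have E3 : d * (2 * (C * k)) <= d * m by rewrite leq_mul2l Ck orbT.
have E4 : m * (C * x) <= m * d by lia.
have mpos : 0 < m by lia.
have : C * x <= d by move: E4; rewrite leq_pmul2l.
lia.
Qed.

(* The final counting contradiction: X vertices with few cliques and h high-degree
   vertices cannot cover all n vertices. *)
Lemma counting_contradiction n k d C X h delta :
  2 * (C + 1) * (k + d + 5) + 2 <= n -> (n - k) * delta <= d * n ->
  X <= k + C * (k + (delta + 1)) -> n <= X + h -> h * (2 * d + 2) <= d * n -> False.
Proof.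
move=> Hn Hdelta HX Hcover Hh; have Hsmall := small_card_degree Hn Hdelta.
have p1 := leq0n (C * k).
have h2 : 2 * h < n.
  by rewrite ltnNge; apply/negP => H; have := leq_mul H (leqnn (d + 1)); lia.
lia.
Qed.

(* The heart of the argument, abstracted from graphs: c1, c2 are the clique
   counts at vertices, N1, N2 the total counts, deg1 the degrees in the first
   graph, and the hypotheses are the card relations derived above. *)
Lemma shifted_counts_le n k d C (c1 c2 deg1 : 'I_n -> nat) (N1 N2 : nat)
    (u w : 'I_(n - k) -> 'I_n) :
  2 * (C + 1) * (k + d + 5) + 2 <= n -> \sum_v deg1 v <= d * n ->
  injective u -> injective w ->
  (forall i, N1 + c2 (w i) = N2 + c1 (u i)) ->
  (forall i t, #|[set v | c2 v <= t]| <= #|[set v | c1 v <= t]| + deg1 (u i) + 1) ->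
  (forall v, deg1 v <= 2 * d + 1 -> c1 v <= C) ->
  N1 <= N2.
Proof.
move=> Hn Hsum uinj winj Hc HA Hlow; rewrite leqNgt; apply/negP => lt.
pose D := N1 - N2; pose A t := #|[set v | c1 v <= t]|.
have D0 : 0 < D by rewrite /D; lia.
have hcu i : c1 (u i) = c2 (w i) + D by have := Hc i; rewrite /D; lia.
have [i1 Hdelta] : exists i, (n - k) * deg1 (u i) <= d * n.
  have [|i Hi] := exists_small_image deg1 _ uinj; first by lia.
  by exists i; apply: leq_trans Hsum.
have step t : A (t + D) <= A t + (k + (deg1 (u i1) + 1)).
  have h1 := card_le_preimage (fun v => c1 v <= t + D) uinj.
  have h2 := card_preimage_le (fun v => c2 v <= t) winj.
  have h3 : #|[set i | c1 (u i) <= t + D]| = #|[set i | c2 (w i) <= t]|.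
    by apply: eq_card => i; rewrite !inE hcu leq_add2r.
  by have := HA i1 t; move: h1 h2 h3; rewrite /A; lia.
have base : A D.-1 <= k.
  have none : [set i | c1 (u i) <= D.-1] = set0.
    by apply/setP => i; rewrite !inE hcu; apply/negbTE; rewrite -ltnNge; lia.
  by have := card_le_preimage (fun v => c1 v <= D.-1) uinj; rewrite none cards0.
have Amono : {homo A : x y / x <= y}.
  move=> x y xy; apply: subset_leq_card; apply/subsetP => v; rewrite !inE.
  by move/leq_trans; apply.
have HX := iterated_growth C D0 Amono base step.
pose h := #|[set v | 2 * d + 2 <= deg1 v]|.
have Hcover : n <= A C + h.
  rewrite -[n]card_ord -cardsT; apply: leq_trans (leq_card_setU _ _).
  apply: subset_leq_card; apply/subsetP => v _; rewrite !inE.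
  by case: (leqP (2 * d + 2) (deg1 v)) => hv; rewrite ?orbT // Hlow //; lia.
exact: counting_contradiction Hn Hdelta HX Hcover (leq_trans (markov_count _ _) Hsum).
Qed.

Lemma k_bound_nat (d n k C : nat) :
  (k%:R <= (n%:R / 2 - 1) / (1 + C%:R) - d%:R - 5 :> rat)%R ->
  2 * (C + 1) * (k + d + 5) + 2 <= n.
Proof.
move=> Hk; have Cpos : (0 < 1 + C%:R :> rat)%R by have := ler0n rat C; lra.
have H1 : ((k%:R + d%:R + 5) * (1 + C%:R) <= n%:R / 2 - 1 :> rat)%R.
  by rewrite -ler_pdivlMr //; lra.
rewrite -(ler_nat rat) !natrD !natrM !natrD; lra.
Qed.

Lemma avg_deg_sum n (e : rel 'I_n) d : 0 < n -> (avg_deg e <= d%:R :> rat)%R ->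
  \sum_v deg e v <= d * n.
Proof. by move=> n0; rewrite /avg_deg ler_pdivrMr ?ltr0n // -natrM ler_nat mulnC. Qed.

Lemma num_cliques_le d r n k (e1 e2 : rel 'I_n) (u w : 'I_(n - k) -> 'I_n) :
  2 * (binom_pred (2 * (d + 1)) r + 1) * (k + d + 5) + 2 <= n ->
  simple_graph e1 -> \sum_v deg e1 v <= d * n -> injective u -> injective w ->
  (forall i, exists F, card_iso_map e1 (u i) e2 (w i) F) ->
  num_cliques e1 r <= num_cliques e2 r.
Proof.
move=> Hn s1 Hsum uinj winj isos.
apply: (@shifted_counts_le _ _ _ _ (cliques_at e1 r) (cliques_at e2 r) (deg e1)
  _ _ u w Hn Hsum uinj winj) => [i | i t | v hv].
- have [F isoF] := isos i.
  by rewrite (num_cliques_split e1 r (u i)) (num_cliques_split e2 r (w i))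
    (cliques_avoiding_iso r isoF); lia.
- have [F isoF] := isos i.
  have h1 := few_cliques_le_avoiding e2 r (w i) t.
  have h2 := few_cliques_avoiding_le_deg r (u i) t s1.
  rewrite /few_cliques (few_cliques_avoiding_iso r t isoF) in h1 h2.
  by apply: leq_trans h1 _; rewrite leq_add2r.
- by apply: leq_trans (cliques_at_le_binom e1 r v) (binom_pred_mono r _); lia.
Qed.

Unset Implicit Arguments.

Theorem theorem2p3 (d r n k : nat) (e1 e2 : rel 'I_n)
  (u w : 'I_(n - k) -> 'I_n) :
  3 <= n ->
  (k%:R <= (n%:R / 2 - 1) / (1 + (binom_pred (2 * (d + 1)) r)%:R)
            - d%:R - 5 :> rat)%R ->
  simple_graph e1 -> simple_graph e2 ->
  (avg_deg e1 <= d%:R)%R -> (avg_deg e2 <= d%:R)%R ->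
  injective u -> injective w ->
  (forall i : 'I_(n - k), cards_iso e1 (u i) e2 (w i)) ->
  num_cliques e1 r = num_cliques e2 r.
Proof.
move=> n3 Hk s1 s2 a1 a2 uinj winj Hiso.
have Hn := k_bound_nat Hk.
have n0 : 0 < n by lia.
have isos12 i : exists F, card_iso_map e1 (u i) e2 (w i) F := card_iso_mapP (Hiso i).
have isos21 i : exists G, card_iso_map e2 (w i) e1 (u i) G.
  by have [F /card_iso_map_inv [G isoG _]] := isos12 i; exists G.
apply/eqP; rewrite eqn_leq.
by rewrite (num_cliques_le Hn s1 (avg_deg_sum n0 a1) uinj winj isos12)
           (num_cliques_le Hn s2 (avg_deg_sum n0 a2) winj uinj isos21).
Qed.
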